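(* Let $X$ and $Y$ be spaces with $X$ compact Hausdorff and let $U$ be an unbased space. Then for every $s\ge0$ the homomorphism $\langle\Xi^U\rangle\colon\langle Y^X\rangle\to\langle (Y^X)^{(U)}\rangle$ maps $\langle Y^X\rangle^{(s)}$ into $\langle (Y^X)^{(U)}\rangle^{(s)}_X$.
   Context: Spaces and maps are based unless called unbased. $\langle W\rangle$ = free abelian group on a set $W$; functions induce homomorphisms $\langle f\rangle$. $Y^X$ = based maps $X\to Y$ (compact-open topology). For $R\subseteq Z$ containing the basepoint, $V\mapsto V|_R$ is induced by restriction. $\mathcal F_n(Z)$ = finite subsets of $Z$ containing the basepoint with at most $n+1$ elements; $\langle Y^Z\rangle^{(s)}=\{V: V|_R=0\ \forall R\in\mathcal F_{s-1}(Z)\}$. $(Y^X)^{(U)}$ is the set of unbased maps $U\to Y^X$; $\Xi^U\colon Y^X\to (Y^X)^{(U)}$ sends $d$ to the constant map at $d$. With $x_0$ the basepoint of $X$, $U\wr X=(U\times X)/(U\times\{x_0\})$ (based at the collapsed set), $\#^X\colon(Y^X)^{(U)}\to Y^{U\wr X}$, $\#^X(w)(u\wr x)=w(u)(x)$, and $\langle (Y^X)^{(U)}\rangle^{(s)}_X=\langle\#^X\rangle^{-1}(\langle Y^{U\wr X}\rangle^{(s)})$. *)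

From HB Require Import structures.
From mathcomp Require Import all_boot all_order all_algebra.
From mathcomp Require Import all_classical topology.
Set Implicit Arguments. Unset Strict Implicit. Unset Printing Implicit Defensive.
Import Order.TTheory GRing.Theory Num.Theory.
Local Open Scope classical_set_scope.
Local Open Scope ring_scope.

(* An element of <W> is a finitely supported function W -> int.           *)
Definition finsupp (W : Type) (V : W -> int) : Prop :=
  finite_set (V @^-1` [set~ 0]).

Definition freemap (W W' : Type) (f : W -> W') (V : W -> int) : W' -> int :=
  fun w' => \sum_(w \in [set w : {classic W} | f w = w']) V w.

Definition bmaps (X Y : topologicalType) (x0 : X) (y0 : Y) :=
  {f : X -> Y | continuous f /\ f x0 = y0}.

Definition restr (Z Y : Type) (R : set Z) (f : Z -> Y) : {z | R z} -> Y :=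
  fun z => f (proj1_sig z).

(* The filtration <Y^Z>^(s): V|_R = 0 for every R containing the basepoint
   with at most s elements (i.e. R in F_{s-1}(Z)).  Maps Z -> Y are given
   by an abstract carrier S with underlying-function map ev. *)
Definition filtr (Z Y S : Type) (ev : S -> Z -> Y) (z0 : Z) (s : nat)
  (V : S -> int) : Prop :=
  forall R : set Z, R z0 -> (R #<= `I_s)%card ->
    freemap (fun d => @restr Z Y R (ev d)) V = (fun _ => 0).

Definition umaps (U X Y : topologicalType) (x0 : X) (y0 : Y) :=
  {w : U -> bmaps x0 y0 |
     continuous (fun u => (proj1_sig (w u) : {compact-open, X -> Y}))}.

Definition Xi (U X Y : topologicalType) (x0 : X) (y0 : Y)
  (d : bmaps x0 y0) : umaps U x0 y0 :=
  exist _ (fun _ => d) (@cst_continuous U {compact-open, X -> Y} (proj1_sig d)).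

(* carrier: the collapsed basepoint (None) and the points (u,x) with x<>x0 *)
Definition wr (U X : Type) (x0 : X) :=
  {p : option (U * X) | forall q, p = Some q -> q.2 <> x0}.

Lemma wr_base_subproof (U X : Type) (x0 : X) :
  forall q : U * X, None = Some q -> q.2 <> x0.
Proof. by []. Qed.

Definition wr_base (U X : Type) (x0 : X) : wr U x0 :=
  exist (fun p : option (U * X) => forall q, p = Some q -> q.2 <> x0)
    None (@wr_base_subproof U X x0).

Lemma wr_pi_subproof (U X : Type) (x0 : X) (p : U * X) :
  p.2 <> x0 -> forall q, Some p = Some q -> q.2 <> x0.
Proof. by move=> h q [<-]. Qed.

Definition wr_pi (U X : topologicalType) (x0 : X) (p : U * X) : wr U x0 :=
  match pselect (p.2 = x0) with
  | left _ => wr_base U x0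
  | right h => exist (fun p : option (U * X) => forall q, p = Some q -> q.2 <> x0) (Some p) (wr_pi_subproof h)
  end.

(* Y^(U wr X): based maps, continuous for the quotient topology, i.e.
   g is continuous iff g \o wr_pi is continuous on U x X *)
Definition wmaps (U X Y : topologicalType) (x0 : X) (y0 : Y) :=
  {g : wr U x0 -> Y | continuous (g \o @wr_pi U X x0) /\ g (wr_base U x0) = y0}.

Definition sharp_fun (U X Y : topologicalType) (x0 : X) (y0 : Y)
  (w : umaps U x0 y0) (z : wr U x0) : Y :=
  match proj1_sig z with
  | None => y0
  | Some p => proj1_sig (proj1_sig w p.1) p.2
  end.

Section sharp.
Import ArrowAsCompactOpen.

Lemma sharp_subproof (U X Y : topologicalType) (x0 : X) (y0 : Y)
  (hX : compact [set: X]) (hH : hausdorff_space X) (w : umaps U x0 y0) :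
  continuous (sharp_fun w \o @wr_pi U X x0) /\ sharp_fun w (wr_base U x0) = y0.
Proof.
split => //.
have -> : sharp_fun w \o @wr_pi U X x0 =
          uncurry (fun u => proj1_sig (proj1_sig w u) : X -> Y).
  apply: funext => -[u x] /=; rewrite /wr_pi /sharp_fun /=.
  case: pselect => [/= ->|//]; by case: (proj2_sig (proj1_sig w u)) => _ ->.
apply: continuous_uncurry => //.
- move=> x _; exists setT; last by split => //; exact: closedT.
  exact: (@filterT _ (within setT (nbhs x)) (within_filter _ _)).
- exact: (proj2_sig w).
- by move=> u; case: (proj2_sig (proj1_sig w u)).
Qed.
End sharp.

Definition sharp (U X Y : topologicalType) (x0 : X) (y0 : Y)
  (hX : compact [set: X]) (hH : hausdorff_space X)
  (w : umaps U x0 y0) : wmaps U x0 y0 :=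
  exist _ (sharp_fun w) (sharp_subproof hX hH w).

Definition filtrX (U X Y : topologicalType) (x0 : X) (y0 : Y)
  (hX : compact [set: X]) (hH : hausdorff_space X) (s : nat)
  (W : umaps U x0 y0 -> int) : Prop :=
  filtr (fun g : wmaps U x0 y0 => proj1_sig g) (wr_base U x0) s
       (freemap (sharp hX hH) W).

From Pilot Require Import Defs.
From HB Require Import structures.
From mathcomp Require Import all_boot all_order all_algebra.
From mathcomp Require Import all_classical topology.
From mathcomp Require finmap.
Set Implicit Arguments. Unset Strict Implicit.

(* Under #^X, the constant map at d becomes d \o k, where k : U wr X -> X
   forgets the U-coordinate and keeps the basepoint.  So the restriction of
   #(Xi d) to a based set R factors through the restriction of d to k(R),
   a based set with no more points than R.  By functoriality of <->, the
   R-restriction of <#><Xi>V is the image of the k(R)-restriction of V,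
   which vanishes. *)
Import Order.TTheory GRing.Theory Num.Theory.
Local Open Scope classical_set_scope.
Local Open Scope ring_scope.

Lemma freemap_seqE (W W' : Type) (f : W -> W') (V : W -> int)
    (r : seq {classic W}) (w' : {classic W'}) :
  uniq r -> (forall w, V w != 0 -> w \in r) ->
  freemap f V w' = \sum_(w <- r | (f w : {classic W'}) == w') V w.
Proof.
move=> ur Vr; rewrite /freemap fsbig_mkcond (fsbigE r) //=.
- rewrite big_mkcond [RHS]big_mkcond; apply: eq_bigr => w _.
  by rewrite in_setT /patch; case: ifP.
- move=> w _ wr; rewrite /patch; case: ifP => // _.
  by apply/eqP; apply: contraNT wr; apply: Vr.
Qed.

Lemma freemap0 (W W' : Type) (f : W -> W') :
  freemap f (fun _ => 0) = (fun _ => 0).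
Proof. by apply: funext => w'; apply: fsbig1. Qed.

Section FreemapComp.
Import finmap.
(* finmap also exports a [finsupp], hence the qualified [Defs.finsupp]. *)

Lemma freemap_comp (W W' W'' : Type) (f : W -> W') (g : W' -> W'')
    (V : W -> int) :
  Defs.finsupp V -> freemap g (freemap f V) = freemap (g \o f) V.
Proof.
move=> hV; apply: funext => c.
pose A := fset_set ([set w | V w <> 0] : set {classic W}).
have VA (w : {classic W}) : V w != 0 -> w \in A.
  by move=> /eqP Vw; rewrite /A in_fset_set //; apply/mem_set.
have fVA (w' : {classic W'}) :
    freemap f V w' = \sum_(w <- A | (f w : {classic W'}) == w') V w.
  exact: freemap_seqE (fset_uniq _) VA.
pose fA := [fset (f w : {classic W'}) | w : {classic W} in A]%fset.
rewrite (freemap_seqE _ _ (r := fA)) ?fset_uniq //; last first.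
  move=> w'; rewrite fVA; apply: contraNT => w'fA.
  apply/eqP/big1_seq => w /andP[/eqP fw wA].
  by case/negP: w'fA; rewrite -fw; apply: in_imfset.
rewrite (freemap_seqE _ _ (fset_uniq _) VA) big_mkcond [RHS]big_mkcond.
rewrite (partition_big_imfset _ (f : {classic W} -> {classic W'})).
apply: eq_bigr => w' _.
rewrite fVA; case: ifPn => [/eqP gw'|gw'].
  by apply: eq_bigr => w /eqP fw; rewrite /= fw gw' eqxx.
by rewrite big1 // => w /eqP fw; rewrite /= fw (negPf gw').
Qed.

End FreemapComp.

Lemma filtr_freemap_precomp (Z Z' Y S S' : Type) (ev : S -> Z -> Y)
    (ev' : S' -> Z' -> Y) (z0 : Z) (z0' : Z') (k : Z' -> Z) (F : S -> S')
    (s : nat) (V : S -> int) :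
  finsupp V -> k z0' = z0 -> (forall d, ev' (F d) = ev d \o k) ->
  filtr ev z0 s V -> filtr ev' z0' s (freemap F V).
Proof.
move=> hV kz0 evF hf R R0 Rs.
have kR0 : (k @` R) z0 by exists z0'.
have kRs : (k @` R #<= `I_s)%card := card_le_trans (card_image_le k R) Rs.
pose h (phi : {z | (k @` R) z} -> Y) : {z | R z} -> Y :=
  fun z => phi (exist _ (k (proj1_sig z)) (imageP k (proj2_sig z))).
rewrite freemap_comp //.
transitivity (freemap (h \o (fun d => @restr _ _ (k @` R) (ev d))) V).
  by congr freemap; apply: funext => d; apply: funext => z; rewrite /= /restr evF.
by rewrite -freemap_comp // hf // freemap0.
Qed.

Definition wr_snd (U X : Type) (x0 : X) (z : wr U x0) : X :=
  if proj1_sig z is Some p then p.2 else x0.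

Theorem lemma14p1 (X Y U : topologicalType) (x0 : X) (y0 : Y)
  (hX : compact [set: X]) (hH : hausdorff_space X) (s : nat)
  (V : bmaps x0 y0 -> int) :
  finsupp V ->
  filtr (fun d : bmaps x0 y0 => proj1_sig d) x0 s V ->
  filtrX hX hH s (freemap (@Xi U X Y x0 y0) V).
Proof.
move=> hV; rewrite /filtrX freemap_comp //.
apply: (filtr_freemap_precomp (k := @wr_snd U X x0)) => // d.
apply: funext => -[[[u x]|] ?] //=.
by case: (proj2_sig d) => _ ->.
Qed.
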